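(* Let $n\ge 2$ be even. Then there exists no matching mechanism that is resolute and symmetric (i.e. $G^*$-symmetric).
   Context: Fix $n\ge 2$, $W=\{1,\dots,n\}$ (women), $M=\{n+1,\dots,2n\}$ (men), $I=W\cup M$. Permutations compose right-to-left. A preference profile is a function $p$ on $I$ assigning to each $x\in W$ a linear order $p(x)$ on $M$ and to each $y\in M$ a linear order $p(y)$ on $W$; $\mathcal{P}$ is the set of preference profiles. A matching is a permutation $\mu$ of $I$ with $\mu(W)=M$, $\mu(M)=W$ and $\mu(\mu(z))=z$ for all $z\in I$; $\mathcal{M}$ is the set of matchings. Let $G^*=\{\varphi\in\mathrm{Sym}(I):\{\varphi(W),\varphi(M)\}=\{W,M\}\}$. For a linear order $R$ on $X\subseteq I$ and $\varphi\in\mathrm{Sym}(I)$, $\varphi R$ is the relation on $\varphi(X)$ with $(a,b)\in\varphi R$ iff $(\varphi^{-1}(a),\varphi^{-1}(b))\in R$. For $p\in\mathcal{P}$ and $\varphi\in G^*$, $p^\varphi\in\mathcal{P}$ is defined by $p^\varphi(z)=\varphi\,p(\varphi^{-1}(z))$. For a permutation $\mu$, $\mu^\varphi=\varphi\mu\varphi^{-1}$, and for a set $S$ of permutations $S^\varphi=\{\mu^\varphi:\mu\in S\}$. A matching mechanism is a correspondence $F$ from $\mathcal{P}$ to $\mathcal{M}$ (a map assigning to each $p$ a subset $F(p)\subseteq\mathcal{M}$). $F$ is resolute if $|F(p)|=1$ for all $p$. For $U\subseteq G^*$, $F$ is $U$-symmetric if $F(p^\varphi)=F(p)^\varphi$ for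 all $p\in\mathcal{P}$, $\varphi\in U$; symmetric means $G^*$-symmetric. *)

From mathcomp Require Import all_boot all_order all_fingroup.
Set Implicit Arguments. Unset Strict Implicit. Unset Printing Implicit Defensive.
Import GroupScope.

(* Agents I = {0,...,2n-1}: women W = {0..n-1} (paper's 1..n),
   men M = {n..2n-1} (paper's n+1..2n). *)
Notation agent n := 'I_(n + n).

Definition women (n : nat) : {set agent n} := [set i : agent n | i < n].
Definition men (n : nat) : {set agent n} := [set i : agent n | n <= i].

(* A binary relation on agents, stored as a finite function (so equality is
   extensional). *)
Definition relI (n : nat) := {ffun agent n * agent n -> bool}.

Definition linear_order_on (n : nat) (X : {set agent n}) (R : relI n) : bool :=
  [&& [forall a, forall b, R (a, b) ==> (a \in X) && (b \in X)],
      [forall a, ~~ R (a, a)],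
      [forall a, forall b, forall c, R (a, b) && R (b, c) ==> R (a, c)] &
      [forall a in X, forall b in X, (a != b) ==> R (a, b) || R (b, a)]].

Definition profile_t (n : nat) := {ffun agent n -> relI n}.

Definition is_profile (n : nat) (p : profile_t n) : bool :=
  [forall x in women n, linear_order_on (men n) (p x)] &&
  [forall y in men n, linear_order_on (women n) (p y)].

Definition rel_act (n : nat) (phi : {perm agent n}) (R : relI n) : relI n :=
  [ffun ab => R ((phi^-1)%g ab.1, (phi^-1)%g ab.2)].

Definition prof_act (n : nat) (phi : {perm agent n}) (p : profile_t n) : profile_t n :=
  [ffun z => rel_act phi (p ((phi^-1)%g z))].

Definition is_matching (n : nat) (mu : {perm agent n}) : bool :=
  [&& mu @: women n == men n, mu @: men n == women n &
      [forall z, mu (mu z) == z]].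

Definition matchings (n : nat) : {set {perm agent n}} :=
  [set mu | is_matching mu].

Definition Gstar (n : nat) : {set {perm agent n}} :=
  [set phi : {perm agent n} | ((phi @: women n == women n) && (phi @: men n == men n)) ||
             ((phi @: women n == men n) && (phi @: men n == women n))].

(* MathComp's conjugation
   mu ^ phi = phi^-1 * mu * phi (with left-to-right composition), i.e. the
   function x |-> phi (mu (phi^-1 x)), which is phi o mu o phi^-1. *)
Definition set_conj (n : nat) (S : {set {perm agent n}}) (phi : {perm agent n})
  : {set {perm agent n}} := [set mu ^ phi | mu in S].

(* A matching mechanism: a correspondence from P to M.  We represent it by a
   function on all candidate profiles whose values on genuine profiles are
   sets of matchings (values off P are irrelevant). *)
Definition is_mechanism (n : nat) (F : profile_t n -> {set {perm agent n}}) : Prop :=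
  forall p, is_profile p -> F p \subset matchings n.

Definition resolute (n : nat) (F : profile_t n -> {set {perm agent n}}) : Prop :=
  forall p, is_profile p -> #|F p| = 1%N.

Definition U_symmetric (n : nat) (U : {set {perm agent n}})
  (F : profile_t n -> {set {perm agent n}}) : Prop :=
  forall p phi, is_profile p -> phi \in U ->
    F (prof_act phi p) = set_conj (F p) phi.

Definition Gstar_symmetric (n : nat) (F : profile_t n -> {set {perm agent n}}) : Prop :=
  U_symmetric (Gstar n) F.

From mathcomp Require Import all_boot all_order all_fingroup zify.

Set Implicit Arguments.
Unset Strict Implicit.
Unset Printing Implicit Defensive.

(** Seat the 2n agents around a circle, women and men alternating, and let
    [rot] turn the circle by one seat: [rot] swaps the two sides, so it lies in
    G^*.  In the profile where everybody ranks the other side by clockwise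
    distance, [rot] is a symmetry, so a resolute symmetric mechanism must pick
    a matching commuting with [rot].  Such a matching moves every seat by the
    same number c of steps; c is odd because it pairs a woman with a man, and
    applying the matching twice gives 2c = 0 mod 2n, so n divides c, which is
    impossible for n even. *)

Section CyclicOrdinals.

Variable m : nat.
Implicit Types i j k : 'I_m.

Lemma val_ordS k : val (ordS k) = if k.+1 < m then k.+1 else 0.
Proof.
rewrite /=; case: ltnP => [lt_k1m | le_mk1]; first exact: modn_small.
have -> : k.+1 = m by have := ltn_ord k; lia.
exact: modnn.
Qed.

Lemma val_iter_ordS d k : val (iter d (@ordS m) k) = (k + d) %% m.
Proof.
elim: d => [|d IHd]; first by rewrite addn0 modn_small.
by rewrite iterS /= IHd -addn1 modnDml -addnA addn1.
Qed.

Lemma odd_ordS k : ~~ odd m -> odd (ordS k) = ~~ odd k.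
Proof.
rewrite val_ordS; case: ltnP => // le_mk1 even_m.
have m_eq : m = k.+1 by have := ltn_ord k; lia.
by move: even_m; rewrite [in odd m]m_eq /= negbK => ->.
Qed.

Definition cyc_dist i j : nat := if i <= j then j - i else j + m - i.

Lemma cyc_dist_inj i : injective (cyc_dist i).
Proof.
move=> j k; rewrite /cyc_dist => eq_d; apply: ord_inj; move: eq_d.
have := ltn_ord i; have := ltn_ord j; have := ltn_ord k.
by case: (leqP i j) => ?; case: (leqP i k) => ? /=; lia.
Qed.

Lemma cyc_dist_ordS i j : cyc_dist (ordS i) (ordS j) = cyc_dist i j.
Proof.
rewrite /cyc_dist !val_ordS; have lt_im := ltn_ord i; have lt_jm := ltn_ord j.
case: (ltnP i.+1 m) => ?; case: (ltnP j.+1 m) => ? /=; rewrite ?ltnS;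
  by case: (leqP i j) => ? /=; lia.
Qed.

Lemma commute_ordS_val (f : 'I_m -> 'I_m) :
  (forall k, f (ordS k) = ordS (f k)) ->
  forall d k, val (f (iter d (@ordS m) k)) = (f k + d) %% m.
Proof.
move=> fS d k; rewrite -val_iter_ordS; congr val.
by elim: d => //= d IHd; rewrite fS IHd.
Qed.

Lemma commute_ordS_involution_dvdn (f : 'I_m -> 'I_m) (m_gt0 : 0 < m) :
  (forall k, f (ordS k) = ordS (f k)) ->
  f (f (Ordinal m_gt0)) = Ordinal m_gt0 -> m %| (f (Ordinal m_gt0)).*2.
Proof.
move=> fS ff_o.
have f_o : f (Ordinal m_gt0) = iter (f (Ordinal m_gt0)) (@ordS m) (Ordinal m_gt0).
  by apply: ord_inj; rewrite val_iter_ordS /= add0n modn_small.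
by rewrite /dvdn -addnn -(commute_ordS_val fS) -f_o ff_o.
Qed.

End CyclicOrdinals.

Definition key_order n (X : {set agent n}) (key : agent n -> nat) : relI n :=
  [ffun ab => [&& ab.1 \in X, ab.2 \in X & key ab.1 < key ab.2]].

Lemma key_order_linear n (X : {set agent n}) (key : agent n -> nat) :
  injective key -> linear_order_on X (key_order X key).
Proof.
move=> key_inj; apply/and4P; split.
- by apply/forallP => a; apply/forallP => b; rewrite ffunE; apply/implyP => /and3P[-> ->].
- by apply/forallP => a; rewrite ffunE ltnn !andbF.
- apply/forallP => a; apply/forallP => b; apply/forallP => c; rewrite !ffunE /=.
  apply/implyP => /andP[/and3P[-> _ lt_ab] /and3P[_ -> lt_bc]].
  exact: ltn_trans lt_ab lt_bc.
- apply/forall_inP => a aX; apply/forall_inP => b bX; apply/implyP => ne_ab.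
  rewrite !ffunE /= aX bX /=; case: ltngtP => // /key_inj eq_ab.
  by rewrite eq_ab eqxx in ne_ab.
Qed.

Section Circle.

Variable n : nat.

Lemma in_women_men (x : agent n) : (x \in women n) = (x \notin men n).
Proof. by rewrite !inE -ltnNge. Qed.

Definition seat_nat (x : agent n) : nat :=
  if x < n then x.*2 else (x - n).*2.+1.

Lemma seat_nat_lt (x : agent n) : seat_nat x < n + n.
Proof. by have := ltn_ord x; rewrite /seat_nat; case: (ltnP x n); lia. Qed.

Lemma seat_nat_inj : injective (fun x => Ordinal (seat_nat_lt x)).
Proof.
move=> x y /(congr1 val); rewrite /= /seat_nat => eq_xy; apply: ord_inj.
by move: eq_xy; case: (ltnP x n) => ?; case: (ltnP y n) => ? /=; lia.
Qed.

Definition seat : {perm agent n} := perm seat_nat_inj.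

Lemma odd_seat (x : agent n) : odd (seat x) = (x \in men n).
Proof. by rewrite permE /= /seat_nat inE; case: ltnP => _ /=; rewrite odd_double. Qed.

Definition rot : {perm agent n} := (seat * perm (@ordS_inj (n + n)) * seat^-1)%g.

Lemma seat_rot (x : agent n) : seat (rot x) = ordS (seat x).
Proof. by rewrite !permM permKV permE. Qed.

Lemma men_rot (x : agent n) : (rot x \in men n) = (x \notin men n).
Proof. by rewrite -!odd_seat seat_rot odd_ordS //; lia. Qed.

Lemma rot_Gstar : rot \in Gstar n.
Proof.
rewrite inE; apply/orP; right.
by apply/andP; split; apply/eqP/setP => x;
  rewrite -preim_permV inE -[x in RHS](permKV rot) ?in_women_men men_rot ?negbK.
Qed.

Definition other_side (z : agent n) : {set agent n} :=
  [set a | (a \in men n) != (z \in men n)].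

Lemma in_other_side (z a : agent n) :
  (a \in other_side z) = ((a \in men n) != (z \in men n)).
Proof. by rewrite inE. Qed.

Definition circular_profile : profile_t n :=
  [ffun z => key_order (other_side z) (fun a => cyc_dist (seat z) (seat a))].

Lemma circular_profile_is_profile : is_profile circular_profile.
Proof.
have lin z : linear_order_on (other_side z) (circular_profile z).
  by rewrite ffunE; apply: key_order_linear => a b /cyc_dist_inj /perm_inj.
apply/andP; split; apply/forall_inP => z z_side.
- suff -> : men n = other_side z by [].
  apply/setP => a; move: z_side; rewrite in_other_side in_women_men => /negbTE ->.
  by case: (a \in men n).
- suff -> : women n = other_side z by [].
  by apply/setP => a; rewrite in_other_side z_side in_women_men; case: (a \in men n).
Qed.

Lemma circular_profile_rot (z a b : agent n) :
  circular_profile (rot z) (rot a, rot b) = circular_profile z (a, b).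
Proof.
by rewrite !ffunE /= !in_other_side !men_rot !seat_rot !cyc_dist_ordS !(inj_eq negb_inj).
Qed.

Lemma prof_act_rot : prof_act rot circular_profile = circular_profile.
Proof.
apply/ffunP => z; apply/ffunP => -[a b].
rewrite -{2}(permKV rot z) -{2}(permKV rot a) -{2}(permKV rot b) circular_profile_rot.
by rewrite !ffunE.
Qed.

Lemma seat_conj_ordS (mu : {perm agent n}) : (mu ^ rot)%g = mu ->
  forall k, seat (mu ((seat^-1)%g (ordS k))) = ordS (seat (mu ((seat^-1)%g k))).
Proof.
move=> muJ k; have -> : (seat^-1 (ordS k) = rot (seat^-1 k))%g.
  by apply: (@perm_inj _ seat); rewrite seat_rot !permKV.
by rewrite -{1}muJ permJ seat_rot.
Qed.

Lemma matching_conj_rot_neq (mu : {perm agent n}) :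
  0 < n -> ~~ odd n -> mu \in matchings n -> (mu ^ rot)%g != mu.
Proof.
move=> n_gt0 even_n; rewrite inE => /and3P[/eqP muW _ /forallP mu_invol].
apply/eqP => /seat_conj_ordS nuS.
have nn_gt0 : 0 < n + n by lia.
have := commute_ordS_involution_dvdn (m_gt0 := nn_gt0) nuS.
rewrite permK (eqP (mu_invol _)) permKV => /(_ erefl).
have : odd (seat (mu ((seat^-1)%g (Ordinal nn_gt0)))).
  by rewrite odd_seat -muW imset_f // in_women_men -odd_seat permKV.
move: (nat_of_ord _) => c odd_c.
rewrite addnn -!mul2n dvdn_pmul2l // => n_dvd_c.
by move: odd_c; rewrite -[odd c]negbK -dvdn2 (dvdn_trans _ n_dvd_c) // dvdn2.
Qed.

End Circle.

Theorem theorem2 (n : nat) (hn : 2 <= n) (heven : ~~ odd n) :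
  ~ exists F : profile_t n -> {set {perm agent n}},
      [/\ is_mechanism F, resolute F & Gstar_symmetric F].
Proof.
move=> [F [mechF resF symF]].
have P_prof := circular_profile_is_profile n.
have /cards1P[mu F_P] : #|F (circular_profile n)| == 1 by rewrite resF.
have mu_matching : mu \in matchings n by apply: (subsetP (mechF _ P_prof)); rewrite F_P set11.
have := symF _ _ P_prof (rot_Gstar n).
rewrite prof_act_rot F_P /set_conj imset_set1 => /set1_inj muJ.
have n_gt0 : 0 < n by lia.
by move: (matching_conj_rot_neq n_gt0 heven mu_matching); rewrite -muJ eqxx.
Qed.
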